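(* Let $S^{(1)}_{\rm tr},S^{(1)}_1,\dots,S^{(1)}_m$ be the output of Algorithm 1 and $S^{(2)}_{\rm tr},S^{(2)}_1,\dots,S^{(2)}_m$ the output of Algorithm 2 (both defined in the context). If every $f_i$ is monotone and submodular, then $$\max\Bigl\{\sum_{i=1}^m f_i\bigl(S^{(1)}_{\rm tr}\cup S^{(1)}_i\bigr),\;\sum_{i=1}^m f_i\bigl(S^{(2)}_{\rm tr}\cup S^{(2)}_i\bigr)\Bigr\}\;\ge\;0.53\cdot\mathrm{OPT}.$$ (That is, the Meta-Greedy algorithm, which runs Algorithms 1 and 2 and returns the solution with larger objective $\sum_i f_i(S_{\rm tr}\cup S_i)$, is $0.53$-approximate.)
   Context: $V$ is a finite ground set with $|V|=n$; $k,l$ are integers with $1\le l<k\le n$. For $i=1,\dots,m$, $f_i:2^V\to\mathbb{R}_{\ge 0}$ is a set function; $f_i$ is monotone if $A\subseteq B\Rightarrow f_i(A)\le f_i(B)$ and submodular if $f_i(A)+f_i(B)\ge f_i(A\cup B)+f_i(A\cap B)$ for all $A,B\subseteq V$. Write $\Delta_i(e\mid S)=f_i(S\cup\{e\})-f_i(S)$. Define $$\mathrm{OPT}=\max_{S_{\rm tr}\subseteq V,\,|S_{\rm tr}|\le l}\;\sum_{i=1}^m\;\max_{S_i\subseteq V,\,|S_i|\le k-l} f_i(S_{\rm tr}\cup S_i).$$ Algorithm 1: start with $S_{\rm tr}=S_1=\dots=S_m=\emptyset$. Phase 1: for $t=1,\dots,l$, choose $e^*\in\arg\max_{e\in V\setminus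 S_{\rm tr}}\sum_{i=1}^m\Delta_i(e\mid S_{\rm tr})$ and set $S_{\rm tr}\leftarrow S_{\rm tr}\cup\{e^*\}$. Phase 2: for $t=1,\dots,k-l$ and each $i$, choose $e_i^*\in\arg\max_{e\in V\setminus(S_{\rm tr}\cup S_i)}\Delta_i(e\mid S_{\rm tr}\cup S_i)$ and set $S_i\leftarrow S_i\cup\{e_i^*\}$. Algorithm 2: start with $S_{\rm tr}=S_1=\dots=S_m=\emptyset$. Phase 1: for each $i$ and $t=1,\dots,k-l$, choose $e_i^*\in\arg\max_{e\in V\setminus S_i}\Delta_i(e\mid S_i)$ and set $S_i\leftarrow S_i\cup\{e_i^*\}$. Phase 2: for $t=1,\dots,l$, choose $e^*\in\arg\max_{e\in V\setminus S_{\rm tr}}\sum_{i=1}^m\Delta_i(e\mid S_{\rm tr}\cup S_i)$ and set $S_{\rm tr}\leftarrow S_{\rm tr}\cup\{e^*\}$. Ties in all argmax's are broken arbitrarily. *)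

From HB Require Import structures.
From mathcomp Require Import all_boot all_order all_algebra.
Set Implicit Arguments. Unset Strict Implicit. Unset Printing Implicit Defensive.
Import Order.TTheory GRing.Theory Num.Theory.
Local Open Scope ring_scope.

Section Defs.
Variables (R : realFieldType) (V : finType).

Definition Delta (f : {set V} -> R) (S : {set V}) (e : V) : R :=
  f (e |: S) - f S.

Definition monotone (f : {set V} -> R) : Prop :=
  forall A B : {set V}, A \subset B -> f A <= f B.

Definition submodular (f : {set V} -> R) : Prop :=
  forall A B : {set V}, f (A :|: B) + f (A :&: B) <= f A + f B.

Definition nonneg (f : {set V} -> R) : Prop := forall A : {set V}, 0 <= f A.

(* [greedy_from B g s]: starting from the current set B, the elements of s
   are added one at a time, each being an argmax of [g cur] over the elements
   not in the current set cur (ties arbitrary). *)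
Fixpoint greedy_from (g : {set V} -> V -> R) (B : {set V}) (s : seq V) : bool :=
  match s with
  | [::] => true
  | e :: s' => [&& e \notin B,
                  [forall e', (e' \notin B) ==> (g B e' <= g B e)]
                & greedy_from g (e |: B) s']
  end.

Variable m : nat.
Variable f : 'I_m -> {set V} -> R.

(* Algorithm 1 possible output (S_tr, S_1..S_m) for some tie-breaking. *)
Definition alg1_output (l k : nat) (Str : {set V}) (S : 'I_m -> {set V}) : Prop :=
  exists (str : seq V) (si : 'I_m -> seq V),
    [/\ size str = l,
        greedy_from (fun T e => \sum_(i < m) Delta (f i) T e) set0 str
      & Str = [set x in str]] /\
    [/\ forall i, size (si i) = (k - l)%N,
        forall i, greedy_from (Delta (f i)) Str (si i)
      & forall i, S i = [set x in si i]].

(* Algorithm 2 possible output (S_tr, S_1..S_m) for some tie-breaking. *)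
Definition alg2_output (l k : nat) (Str : {set V}) (S : 'I_m -> {set V}) : Prop :=
  exists (str : seq V) (si : 'I_m -> seq V),
    [/\ forall i, size (si i) = (k - l)%N,
        forall i, greedy_from (Delta (f i)) set0 (si i)
      & forall i, S i = [set x in si i]] /\
    [/\ size str = l,
        greedy_from (fun T e => \sum_(i < m) Delta (f i) (T :|: S i) e) set0 str
      & Str = [set x in str]].

(* OPT = max_{|S_tr|<=l} sum_i max_{|S_i|<=k-l} f_i(S_tr u S_i)
   (maxima over nonempty finite families of nonnegative values, so
   using 0 as the neutral element of max is harmless). *)
Definition OPT (l k : nat) : R :=
  \big[Num.max/0]_(A : {set V} | (#|A| <= l)%N)
     \sum_(i < m) \big[Num.max/0]_(B : {set V} | (#|B| <= k - l)%N) f i (A :|: B).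

Definition objective (Str : {set V}) (S : 'I_m -> {set V}) : R :=
  \sum_(i < m) f i (Str :|: S i).

End Defs.

(* Write [total T = sum_i f_i T]. Fix a feasible solution [(Otr, O_1..O_m)]
   of value [opt] and let [t] be the better of the two objectives. Each phase
   of each algorithm is a greedy run on a monotone submodular function
   ([total] for the shared set of Algorithm 1, [f_i] for the personal sets,
   [T |-> sum_i f_i (T :|: S_i)] for the shared set of Algorithm 2), and we
   use two classical greedy guarantees:
   - [greedy_approx]: after [n] steps the gap to any [K]-set shrinks by the
     factor [(1 - 1/K)^n], which is [<= 0.37] for [n = K] and [<= 0.61] for
     [K = 2n] (numeric lemmas proved from [1 + x <= exp x] and [e > 100/37]);
   - [greedy_half]: after [n] steps the greedy set is half-competitive
     against any [n]-set.
   Two submodular decompositions of [opt] ([opt_split_shared],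
   [opt_split_personal]) link these bounds, and a linear combination of the
   resulting eight inequalities gives [0.53 * opt <= t]
   ([meta_greedy_feasible]). Since [OPT] is attained by a feasible solution
   ([OPT_attained]), the theorem follows. *)

From Stdlib Require Reals Lra ZArith.

Module EulerBound.
Import Reals Lra ZArith.
Local Open Scope R_scope.

Lemma exp_pow (x : R) (n : nat) : exp x ^ n = exp (INR n * x).
Proof.
  induction n as [|n IH].
  - simpl; rewrite Rmult_0_l, exp_0; reflexivity.
  - rewrite <- tech_pow_Rmult, IH, <- exp_plus, S_INR; f_equal; ring.
Qed.

Lemma pow_129_128_lb : 100 / 37 <= (129 / 128) ^ 128.
Proof.
  unfold Rdiv; rewrite Rpow_mult_distr, pow_inv, !pow_IZR.
  assert (Hb : 0 < IZR (128 ^ Z.of_nat 128)) by (apply IZR_lt; reflexivity).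
  assert (Hab : 100 * IZR (128 ^ Z.of_nat 128) <= 37 * IZR (129 ^ Z.of_nat 128))
    by (rewrite <- !mult_IZR; apply IZR_le; vm_compute; discriminate).
  revert Hb Hab; generalize (IZR (129 ^ Z.of_nat 128)) (IZR (128 ^ Z.of_nat 128)).
  intros a b Hb Hab.
  apply (Rmult_le_reg_r b); [lra|].
  rewrite (Rmult_assoc a), Rinv_l; lra.
Qed.

(* [e >= 100/37], since [e = exp (1/128) ^ 128 >= (1 + 1/128) ^ 128]. *)
Lemma exp_1_lb : 100 / 37 <= exp 1.
Proof.
  assert (Hstep : 129 / 128 <= exp (1 / 128))
    by (pose proof (exp_ineq1_le (1 / 128)); lra).
  assert (Hexp : exp (1 / 128) ^ 128 = exp 1).
  { rewrite exp_pow; f_equal; rewrite INR_IZR_INZ; simpl; lra. }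
  rewrite <- Hexp.
  apply Rle_trans with ((129 / 128) ^ 128);
    [exact pow_129_128_lb | apply pow_incr; lra].
Qed.

(* [(1 - 1/x)^n <= exp (-n/x)], from [1 + y <= exp y]. *)
Lemma pow_one_sub_inv_le_exp (x : R) (n : nat) :
  1 <= x -> (1 - / x) ^ n <= exp (- (INR n / x)).
Proof.
  intros Hx.
  assert (Hinv : / x <= 1) by (rewrite <- Rinv_1; apply Rinv_le_contravar; lra).
  replace (- (INR n / x)) with (INR n * - / x) by (unfold Rdiv; ring).
  rewrite <- exp_pow; apply pow_incr; split; [lra|].
  pose proof (exp_ineq1_le (- / x)); lra.
Qed.

(* [(1 - 1/N)^N <= 1/e <= 37/100], stated on integers. *)
Lemma euler_bound (N : nat) : (1 <= N)%nat -> (100 * (N - 1) ^ N <= 37 * N ^ N)%nat.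
Proof.
  intros HN; apply INR_le.
  rewrite !mult_INR, !pow_INR, minus_INR by exact HN.
  assert (Hx : 1 <= INR N) by (apply (le_INR 1 N) in HN; exact HN).
  assert (Hpow : (1 - / INR N) ^ N <= 37 / 100).
  { eapply Rle_trans; [apply pow_one_sub_inv_le_exp; exact Hx|].
    replace (INR N / INR N) with 1 by (field; lra).
    rewrite exp_Ropp; replace (37 / 100) with (/ (100 / 37)) by field.
    apply Rinv_le_contravar; [lra | exact exp_1_lb]. }
  replace (INR 1) with 1 by reflexivity.
  replace (INR N - 1) with (INR N * (1 - / INR N)) by (field; lra).
  rewrite Rpow_mult_distr.
  assert (HNN : 0 <= INR N ^ N) by (apply pow_le; lra).
  replace (INR 100) with 100 by (rewrite INR_IZR_INZ; reflexivity).
  replace (INR 37) with 37 by (rewrite INR_IZR_INZ; reflexivity).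
  nra.
Qed.

End EulerBound.

From HB Require Import structures.
From mathcomp Require Import all_boot all_order all_algebra.
From mathcomp Require Import lra.
Import Order.TTheory GRing.Theory Num.Theory.
Set Implicit Arguments. Unset Strict Implicit. Unset Printing Implicit Defensive.
Local Open Scope ring_scope.

Lemma Nat_powE (m n : nat) : Nat.pow m n = (m ^ n)%N.
Proof. by elim: n => [|n IH] //=; rewrite expnS IH mulnE. Qed.

(* [(1 - 1/N)^N <= 37/100] in any real field, transferred from the reals
   through its integer form. *)
Lemma one_sub_inv_pow_le (R : realFieldType) (N : nat) : (0 < N)%N ->
  (1 - (N%:R : R)^-1) ^+ N <= 37 / 100.
Proof.
move=> N_gt0.
have N_pos : (0 : R) < N%:R by rewrite ltr0n.
have bound : (100 * (N - 1) ^ N <= 37 * N ^ N)%N.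
  by apply/ssrnat.leP; rewrite -!Nat_powE; apply: EulerBound.euler_bound; apply/ssrnat.leP.
have -> : 1 - (N%:R)^-1 = (N - 1)%:R / N%:R :> R.
  by rewrite natrB // mulrBl divff ?mul1r // gt_eqF.
rewrite exprMn exprVn -!natrX ler_pdivrMr ?ltr0n ?expn_gt0 ?N_gt0 //.
by move: bound; rewrite -(ler_nat R) !natrM; lra.
Qed.

(* Taking square roots: [(1 - 1/(2N))^N <= 61/100], as [0.61^2 >= 0.37]. *)
Lemma one_sub_inv_double_pow_le (R : realFieldType) (N : nat) : (0 < N)%N ->
  (1 - ((2 * N)%N%:R : R)^-1) ^+ N <= 61 / 100.
Proof.
move=> N_gt0.
have := @one_sub_inv_pow_le R (2 * N)%N; rewrite muln_gt0 N_gt0 => /(_ isT).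
rewrite mulnC exprM.
set y := (1 - _) ^+ N => y2.
have y_ge0 : 0 <= y.
  by rewrite exprn_ge0 // subr_ge0 invf_le1 ?ltr0n ?muln_gt0 ?N_gt0 // ler1n muln_gt0 N_gt0.
rewrite -(@ler_pXn2r _ 2) ?nnegrE //; lra.
Qed.

Lemma setU_cons (T : finType) (B : {set T}) (e : T) (s : seq T) :
  B :|: [set x in e :: s] = (e |: B) :|: [set x in s].
Proof. by rewrite (set_cons e s) setUCA setUA. Qed.

Section SubmodularGains.
Variables (R : realFieldType) (V : finType) (h : {set V} -> R).
Hypotheses (h_mono : monotone h) (h_sub : submodular h).
Implicit Types (S T O : {set V}) (e : V).

Lemma gain_ge0 S e : 0 <= h (e |: S) - h S.
Proof. by rewrite subr_ge0; apply/h_mono/subsetUr. Qed.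

Lemma diminishing_returns S T O :
  S \subset T -> h (T :|: O) - h T <= h (S :|: O) - h S.
Proof.
move=> ST; have := h_sub (S :|: O) T.
have -> : S :|: O :|: T = T :|: O by rewrite setUAC (setUidPr ST) setUC.
have : h S <= h ((S :|: O) :&: T) by apply/h_mono; rewrite subsetI subsetUl ST.
lra.
Qed.

Lemma gain_le_sum_gains_seq S (s : seq V) :
  h (S :|: [set x in s]) - h S <= \sum_(o <- s) (h (o |: S) - h S).
Proof.
elim: s => [|o s IH]; first by rewrite big_nil setU0 subrr.
rewrite big_cons setU_cons.
have := @diminishing_returns _ _ [set o] (subsetUl S [set x in s]).
rewrite setUAC ![S :|: [set o]]setUC.
lra.
Qed.

Lemma gain_le_sum_gains S O :
  h (S :|: O) - h S <= \sum_(o in O) (h (o |: S) - h S).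
Proof. by rewrite -big_enum -{1}(set_enum O); apply: gain_le_sum_gains_seq. Qed.

Lemma gain_le_max_gain S e O (K : nat) :
  (forall e', e' \notin S -> h (e' |: S) - h S <= h (e |: S) - h S) ->
  (#|O| <= K)%N -> h (S :|: O) - h S <= K%:R * (h (e |: S) - h S).
Proof.
move=> e_max O_le; apply: le_trans (gain_le_sum_gains S O) _.
apply: le_trans (_ : \sum_(o in O) (h (e |: S) - h S) <= _).
  apply: ler_sum => o _; case: (boolP (o \in S)) => [oS|]; last exact: e_max.
  by rewrite (setUidPr _) ?sub1set // subrr gain_ge0.
rewrite sumr_const -[_ *+ #|O|]mulr_natl.
by apply: ler_wpM2r; rewrite ?gain_ge0 ?ler_nat.
Qed.

End SubmodularGains.

Section GreedyAnalysis.
Variables (R : realFieldType) (V : finType) (h : {set V} -> R).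
Hypotheses (h_mono : monotone h) (h_sub : submodular h).
Variable g : {set V} -> V -> R.
Hypothesis g_gain : forall T e, g T e = h (e |: T) - h T.
Implicit Types (B O : {set V}) (e : V) (s : seq V).

Lemma greedy_consP B e s : greedy_from g B (e :: s) ->
  (forall e', e' \notin B -> h (e' |: B) - h B <= h (e |: B) - h B)
  /\ greedy_from g (e |: B) s.
Proof.
case/and3P=> _ /forallP e_max greedy_s; split=> // e' e'B.
by have := e_max e'; rewrite e'B -!g_gain.
Qed.

(* The classical greedy contraction: each greedy step closes at least a
   [1/K] fraction of the gap to any target [W <= h (B :|: O)], [#|O| <= K]. *)
Lemma greedy_contraction (K : nat) O s B W :
  (0 < K)%N -> (#|O| <= K)%N -> greedy_from g B s -> W <= h (B :|: O) ->
  W - h (B :|: [set x in s]) <= (1 - K%:R^-1) ^+ size s * (W - h B).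
Proof.
move=> K_gt0 O_le; set q := 1 - K%:R^-1.
have K_pos : (0 : R) < K%:R by rewrite ltr0n.
have q_ge0 : 0 <= q by rewrite subr_ge0 invf_le1 // ler1n.
elim: s B W => [|e s IH] B W.
  by move=> _ _; rewrite set_nil setU0 expr0 mul1r.
case/greedy_consP=> e_max greedy_s W_le.
have step : W - h (e |: B) <= q * (W - h B).
  have gap : W - h B <= K%:R * (h (e |: B) - h B).
    by apply: le_trans (gain_le_max_gain h_mono h_sub e_max O_le); rewrite lerD2r.
  rewrite -ler_pdivrMl // in gap; rewrite /q mulrBl mul1r; lra.
rewrite setU_cons /= exprSr -mulrA.
apply: le_trans (IH _ _ greedy_s _) _.
  by apply: le_trans W_le _; apply/h_mono/setSU/subsetUr.
by apply: ler_wpM2l step; apply: exprn_ge0.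
Qed.

Lemma greedy_approx (K : nat) O s B (r : R) :
  (0 < K)%N -> (#|O| <= K)%N -> greedy_from g B s ->
  (1 - K%:R^-1) ^+ size s <= r ->
  h (B :|: O) - r * (h (B :|: O) - h B) <= h (B :|: [set x in s]).
Proof.
move=> K_gt0 O_le greedy_s q_le.
have := greedy_contraction K_gt0 O_le greedy_s (lexx _).
have : (1 - K%:R^-1) ^+ size s * (h (B :|: O) - h B) <= r * (h (B :|: O) - h B).
  by apply: ler_wpM2r; rewrite // subr_ge0; apply/h_mono/subsetUl.
lra.
Qed.

Lemma greedy_total_gain (K : nat) O s B :
  (#|O| <= K)%N -> greedy_from g B s ->
  let T := B :|: [set x in s] in
  (size s)%:R * (h (T :|: O) - h T) <= K%:R * (h T - h B).
Proof.
move=> O_le; elim: s B => [|e s IH] B /=.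
  by move=> _; rewrite mul0r set_nil setU0 subrr mulr0.
case/greedy_consP=> e_max /IH /=; rewrite setU_cons.
set T := (e |: B) :|: [set x in s] => IHs.
have B_sub : B \subset T := subset_trans (subsetUr [set e] B) (subsetUl _ _).
have := diminishing_returns h_mono h_sub O B_sub.
have := gain_le_max_gain h_mono h_sub e_max O_le.
rewrite -natr1 mulrDl mul1r; nra.
Qed.

Lemma greedy_half O s B :
  (0 < size s)%N -> (#|O| <= size s)%N -> greedy_from g B s ->
  let T := B :|: [set x in s] in h (T :|: O) - h T <= h T - h B.
Proof.
move=> s_gt0 O_le greedy_s /=.
by have := greedy_total_gain O_le greedy_s; rewrite /= ler_pM2l ?ltr0n.
Qed.

End GreedyAnalysis.

Section Closure.
Variables (R : realFieldType) (V : finType).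

Lemma monotone_setU (h : {set V} -> R) (C : {set V}) :
  monotone h -> monotone (fun T => h (T :|: C)).
Proof. by move=> h_mono A B AB; apply/h_mono/setSU. Qed.

Lemma submodular_setU (h : {set V} -> R) (C : {set V}) :
  submodular h -> submodular (fun T => h (T :|: C)).
Proof.
move=> h_sub A B /=; have := h_sub (A :|: C) (B :|: C).
by rewrite setUACA setUid -setUIl.
Qed.

Lemma monotone_sum (I : finType) (hs : I -> {set V} -> R) :
  (forall i, monotone (hs i)) -> monotone (fun T => \sum_i hs i T).
Proof. by move=> hs_mono A B AB; apply: ler_sum => i _; apply: hs_mono. Qed.

Lemma submodular_sum (I : finType) (hs : I -> {set V} -> R) :
  (forall i, submodular (hs i)) -> submodular (fun T => \sum_i hs i T).
Proof. by move=> hs_sub A B; rewrite -!big_split; apply: ler_sum => i _; apply: hs_sub. Qed.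

End Closure.

Section MetaGreedy.
Variables (R : realFieldType) (V : finType) (m : nat) (f : 'I_m -> {set V} -> R).
Hypotheses (f_ge0 : forall i, nonneg (f i)) (f_mono : forall i, monotone (f i))
           (f_sub : forall i, submodular (f i)).

Definition total (T : {set V}) : R := \sum_(i < m) f i T.

Lemma total_mono : monotone total.
Proof. exact: monotone_sum. Qed.

Lemma total_sub : submodular total.
Proof. exact: submodular_sum. Qed.

Lemma opt_split_shared (A Otr : {set V}) (O : 'I_m -> {set V}) :
  \sum_i f i (Otr :|: O i) <= \sum_i f i (A :|: O i) + (total (A :|: Otr) - total A).
Proof.
rewrite /total -sumrB -big_split /=; apply: ler_sum => i _.
have := diminishing_returns (f_mono i) (f_sub i) Otr (subsetUl A (O i)).
have : f i (Otr :|: O i) <= f i (A :|: O i :|: Otr).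
  by apply/f_mono/subsetP => x; rewrite !inE => /orP [] ->; rewrite ?orbT.
lra.
Qed.

Lemma opt_split_personal (Otr : {set V}) (O S : 'I_m -> {set V}) :
  \sum_i f i (Otr :|: O i) <=
  \sum_i f i (Otr :|: S i) + \sum_i (f i (S i :|: O i) - f i (S i)).
Proof.
rewrite -big_split /=; apply: ler_sum => i _.
have := diminishing_returns (f_mono i) (f_sub i) (O i) (subsetUr Otr (S i)).
have : f i (Otr :|: O i) <= f i (Otr :|: S i :|: O i).
  by apply: f_mono; rewrite -setUA setUS // subsetUr.
lra.
Qed.

Variables (l k : nat).
Hypotheses (l_gt0 : (0 < l)%N) (l_lt_k : (l < k)%N).

Lemma alg1_shared_half (Str : {set V}) (S : 'I_m -> {set V}) (Otr : {set V}) :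
  alg1_output f l k Str S -> (#|Otr| <= l)%N ->
  total (Str :|: Otr) - total Str <= total Str.
Proof.
move=> [str [_ [[str_size str_greedy Str_def] _]]] Otr_le.
have gain : forall T e, \sum_i Delta (f i) T e = total (e |: T) - total T.
  by move=> T e; rewrite /Delta sumrB.
have str_gt0 : (0 < size str)%N by rewrite str_size.
have Otr_le' : (#|Otr| <= size str)%N by rewrite str_size.
have := greedy_half total_mono total_sub gain str_gt0 Otr_le' str_greedy.
rewrite /= set0U -Str_def.
have : 0 <= total set0 by apply: sumr_ge0 => i _; apply: f_ge0.
lra.
Qed.

Lemma alg1_personal (Str : {set V}) (S O : 'I_m -> {set V}) :
  alg1_output f l k Str S -> (forall i, (#|O i| <= k - l)%N) ->
  \sum_i f i (Str :|: O i) - 37 / 100 * (\sum_i f i (Str :|: O i) - total Str)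
    <= objective f Str S.
Proof.
move=> [_ [si [_ [si_size si_greedy S_def]]]] O_le.
have kl_gt0 : (0 < k - l)%N by rewrite subn_gt0.
rewrite /total -sumrB mulr_sumr -sumrB; apply: ler_sum => i _.
have := greedy_approx (f_mono i) (f_sub i) (fun _ _ => erefl) kl_gt0 (O_le i)
  (si_greedy i) (r := 37 / 100).
by rewrite -S_def si_size; apply; apply: one_sub_inv_pow_le.
Qed.

Lemma alg2_personal_half (Str : {set V}) (S O : 'I_m -> {set V}) :
  alg2_output f l k Str S -> (forall i, (#|O i| <= k - l)%N) ->
  \sum_i (f i (S i :|: O i) - f i (S i)) <= \sum_i f i (S i).
Proof.
move=> [_ [si [[si_size si_greedy S_def] _]]] O_le.
have kl_gt0 : (0 < k - l)%N by rewrite subn_gt0.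
apply: ler_sum => i _.
have si_gt0 : (0 < size (si i))%N by rewrite si_size.
have Oi_le : (#|O i| <= size (si i))%N by rewrite si_size.
have := greedy_half (f_mono i) (f_sub i) (fun _ _ => erefl) si_gt0 Oi_le (si_greedy i).
rewrite /= set0U -S_def.
have := f_ge0 i set0; lra.
Qed.

Lemma alg2_shared (Str : {set V}) (S : 'I_m -> {set V}) (X : {set V}) (K : nat) (r : R) :
  alg2_output f l k Str S -> (0 < K)%N -> (#|X| <= K)%N ->
  (1 - K%:R^-1) ^+ l <= r ->
  \sum_i f i (X :|: S i) - r * (\sum_i f i (X :|: S i) - \sum_i f i (S i))
    <= objective f Str S.
Proof.
move=> [str [_ [_ [str_size str_greedy Str_def]]]] K_gt0 X_le r_ge.
pose H T := \sum_i f i (T :|: S i).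
have H_mono : monotone H by apply: monotone_sum => i; apply: monotone_setU.
have H_sub : submodular H by apply: submodular_sum => i; apply: submodular_setU.
have gain : forall T e, \sum_i Delta (f i) (T :|: S i) e = H (e |: T) - H T.
  by move=> T e; rewrite /Delta sumrB; congr (_ - _); apply: eq_bigr => i _; rewrite setUA.
have := greedy_approx H_mono H_sub gain K_gt0 X_le str_greedy.
rewrite str_size => /(_ r r_ge); rewrite -Str_def /H !set0U.
by under [\sum_i f i (set0 :|: S i)]eq_bigr do rewrite set0U.
Qed.

Lemma alg1_shared_card (Str : {set V}) (S : 'I_m -> {set V}) :
  alg1_output f l k Str S -> (#|Str| <= l)%N.
Proof. by move=> [str [_ [[<- _ ->] _]]]; rewrite cardsE card_size. Qed.

Lemma meta_greedy_feasible (Str1 Str2 Otr : {set V}) (S1 S2 O : 'I_m -> {set V}) :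
  alg1_output f l k Str1 S1 -> alg2_output f l k Str2 S2 ->
  (#|Otr| <= l)%N -> (forall i, (#|O i| <= k - l)%N) ->
  53 / 100 * \sum_i f i (Otr :|: O i) <= Num.max (objective f Str1 S1) (objective f Str2 S2).
Proof.
move=> alg1 alg2 Otr_le O_le.
have obj1_le : objective f Str1 S1 <= Num.max (objective f Str1 S1) (objective f Str2 S2).
  by rewrite le_max lexx.
have obj2_le : objective f Str2 S2 <= Num.max (objective f Str1 S1) (objective f Str2 S2).
  by rewrite le_max lexx orbT.
have shared1 := alg1_shared_half alg1 Otr_le.
have split1 := opt_split_shared Str1 Otr O.
have personal1 := alg1_personal alg1 O_le.
have personal2 := alg2_personal_half alg2 O_le.
have split2 := opt_split_personal Otr O S2.
have shared2 := alg2_shared alg2 l_gt0 Otr_le (@one_sub_inv_pow_le R l l_gt0).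
have union_le : (#|Otr :|: Str1| <= 2 * l)%N.
  by rewrite mul2n -addnn (leq_trans (leq_card_setU _ _).1) ?leq_add ?(alg1_shared_card alg1).
have l2_gt0 : (0 < 2 * l)%N by rewrite muln_gt0 l_gt0.
have shared2' := alg2_shared alg2 l2_gt0 union_le (@one_sub_inv_double_pow_le R l l_gt0).
have transfer : total (Str1 :|: Otr) <= \sum_i f i (Otr :|: Str1 :|: S2 i).
  by apply: ler_sum => i _; apply/f_mono; rewrite setUC subsetUl.
have opt_ge0 : 0 <= \sum_i f i (Otr :|: O i) by apply: sumr_ge0 => i _; apply: f_ge0.
lra.
Qed.

End MetaGreedy.

Lemma OPT_attained (R : realFieldType) (V : finType) (m : nat)
    (f : 'I_m -> {set V} -> R) (l k : nat) :
  (forall i, nonneg (f i)) ->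
  exists (A : {set V}) (B : 'I_m -> {set V}),
    [/\ (#|A| <= l)%N, forall i, (#|B i| <= k - l)%N
      & OPT f l k = \sum_i f i (A :|: B i)].
Proof.
move=> f_ge0.
have empty_le (n : nat) : (#|(set0 : {set V})| <= n)%N by rewrite cards0.
have best_personal A i : {B : {set V} | (#|B| <= k - l)%N &
    \big[Num.max/0]_(X : {set V} | (#|X| <= k - l)%N) f i (A :|: X) = f i (A :|: B)}.
  by apply: eq_bigmax (empty_le _) _ => X _; apply: f_ge0.
have [A A_le ->] : {A : {set V} | (#|A| <= l)%N & OPT f l k =
    \sum_i \big[Num.max/0]_(X : {set V} | (#|X| <= k - l)%N) f i (A :|: X)}.
  apply: eq_bigmax (empty_le l) _ => A _; apply: sumr_ge0 => i _.
  exact: le_trans (f_ge0 i (A :|: set0)) (le_bigmax_cond _ _ (empty_le _)).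
exists A, (fun i => s2val (best_personal A i)); split=> // [i|].
  exact: (s2valP (best_personal A i)).
by apply: eq_bigr => i _; case: (best_personal A i).
Qed.

Theorem theorem1 (R : realFieldType) (V : finType) (m : nat)
  (f : 'I_m -> {set V} -> R) (l k : nat)
  (hl : (1 <= l)%N) (hlk : (l < k)%N) (hkn : (k <= #|V|)%N)
  (hnn : forall i, nonneg (f i))
  (hmono : forall i, monotone (f i))
  (hsub : forall i, submodular (f i))
  (Str1 : {set V}) (S1 : 'I_m -> {set V})
  (Str2 : {set V}) (S2 : 'I_m -> {set V}) :
  alg1_output f l k Str1 S1 ->
  alg2_output f l k Str2 S2 ->
  Num.max (objective f Str1 S1) (objective f Str2 S2)
    >= (53%:R / 100%:R) * OPT f l k.
Proof.
move=> alg1 alg2.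
have [Otr [O [Otr_le O_le ->]]] := OPT_attained l k hnn.
by have := meta_greedy_feasible hnn hmono hsub hl hlk alg1 alg2 Otr_le O_le.
Qed.
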